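(* Let $r\ge1$ and $s\ge1$ be integers, let $u<v$, and let $g$ be a function whose derivative $g^{(r+s-1)}$ exists and is continuous on an open interval containing $[u,v]$. For nonnegative integers $i,j$ and $x\ne y$ define \[ {}_iM_j(x,y)=\frac{\partial^{i+j}}{\partial x^i\,\partial y^j}\left(\frac{g(y)-g(x)}{y-x}\right). \] Then \[ E\left[g^{(r+s-1)}(B_{r,s}(u,v))\right]=\frac{1}{B(r,s)}\ {}_{r-1}M_{s-1}(u,v), \] i.e. \[ \int_u^v g^{(r+s-1)}(t)\,(t-u)^{s-1}(v-t)^{r-1}\,dt=(v-u)^{r+s-1}\ {}_{r-1}M_{s-1}(u,v). \]
   Context: For $r>0$, $s>0$ and $u<v$, $B_{r,s}(u,v)$ denotes a generalized Beta random variable with density \[ f_B(y)=\frac{1}{B(r,s)}\frac{(y-u)^{s-1}(v-y)^{r-1}}{(v-u)^{r+s-1}},\qquad u\le y\le v, \] where $B(\cdot,\cdot)$ is the Beta function. *)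

From Stdlib Require Import Reals.
Open Scope R_scope.

Definition ddiff (g : R -> R) (x y : R) : R := (g y - g x) / (y - x).

(* Off-diagonal part of the open square (a,b)^2, where ddiff g is defined. *)
Definition offdiag (a b x y : R) : Prop := a < x < b /\ a < y < b /\ x <> y.

(* [D] is a family of mixed partial derivatives of [F] on the off-diagonal
   part of (a,b)^2 realising  d^(i+j) F / dx^i dy^j  :
   D 0 0 = F; D 0 (k+1) = d/dy (D 0 k) for k < j;
   D (k+1) j = d/dx (D k j) for k < i.  The value of the partial derivative
   at (x,y) is then D i j x y. *)
Definition mixed_partials (F : R -> R -> R) (a b : R) (i j : nat)
    (D : nat -> nat -> R -> R -> R) : Prop :=
  (forall x y, offdiag a b x y -> D 0%nat 0%nat x y = F x y) /\
  (forall k x y, (k < j)%nat -> offdiag a b x y ->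
     derivable_pt_lim (fun y' => D 0%nat k x y') y (D 0%nat (S k) x y)) /\
  (forall k x y, (k < i)%nat -> offdiag a b x y ->
     derivable_pt_lim (fun x' => D k j x' y) x (D (S k) j x y)).

Definition has_integral (f : R -> R) (a b I : R) : Prop :=
  exists pr : Riemann_integrable f a b, RiemannInt pr = I.

Definition is_Beta (r s : nat) (Bv : R) : Prop :=
  has_integral (fun t => t ^ (r - 1) * (1 - t) ^ (s - 1)) 0 1 Bv.

(* Density of the generalized Beta variable B_{r,s}(u,v), given B(r,s) = Bv. *)
Definition beta_density (r s : nat) (u v Bv : R) (y : R) : R :=
  / Bv * ((y - u) ^ (s - 1) * (v - y) ^ (r - 1)) / (v - u) ^ (r + s - 1).

From Stdlib Require Import Reals Lra Lia Psatz.
From Coquelicot Require Import Coquelicot.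
Open Scope R_scope.

(* By the fundamental theorem of calculus, (g(y) - g(x)) / (y - x) is the
   integral of g'(x + t (y - x)) over t in [0,1].  Differentiating under the
   integral sign, each derivative in y brings out a factor t and each
   derivative in x a factor 1 - t, so that
     _iM_j(x,y) = int_0^1 g^(i+j+1)(x + t (y - x)) (1 - t)^i t^j dt
   on the off-diagonal part of (a,b)^2.  At (u,v), the substitution
   z = u + t (v - u) turns this into the claimed integral, and dividing by
   B(r,s) (v - u)^(r+s-1) produces the Beta density.  Any other family of
   mixed partials agrees with this one, since derivatives are unique and the
   off-diagonal is open. *)

Lemma segment_locally_in_interval a b x y : a < x < b -> a < y < b ->
  exists d : posreal, forall c t, Rabs (c - y) < d -> -d < t < 1 + d ->
    a < x + t * (c - x) < b.
Proof.
  intros Hx Hy.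
  pose proof (Rmin_l (Rmin (x - a) (b - x)) (Rmin (y - a) (b - y))).
  pose proof (Rmin_r (Rmin (x - a) (b - x)) (Rmin (y - a) (b - y))).
  pose proof (Rmin_l (x - a) (b - x)); pose proof (Rmin_r (x - a) (b - x)).
  pose proof (Rmin_l (y - a) (b - y)); pose proof (Rmin_r (y - a) (b - y)).
  set (e := Rmin (Rmin (x - a) (b - x)) (Rmin (y - a) (b - y))) in *.
  assert (He : 0 < e) by (unfold e; repeat apply Rmin_case; lra).
  assert (Hd : 0 < e / (b - a + 1)) by (apply Rdiv_lt_0_compat; lra).
  exists (mkposreal _ Hd); simpl; intros c t Hc Ht.
  set (d := e / (b - a + 1)) in *.
  assert (Hde : d * (b - a + 1) = e) by (unfold d; field; lra).
  apply Rabs_def2 in Hc.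
  destruct (Rlt_le_dec t 0); [|destruct (Rle_lt_dec t 1)]; split; nra.
Qed.

Lemma offdiag_open a b x y : offdiag a b x y ->
  exists d : posreal, forall x' y', Rabs (x' - x) < d -> Rabs (y' - y) < d ->
    offdiag a b x' y'.
Proof.
  intros (Hx & Hy & Hxy).
  assert (Hyx : 0 < Rabs (y - x)) by (apply Rabs_pos_lt; lra).
  pose proof (Rmin_l (Rmin (Rmin (x - a) (b - x)) (Rmin (y - a) (b - y))) (Rabs (y - x) / 2)).
  pose proof (Rmin_r (Rmin (Rmin (x - a) (b - x)) (Rmin (y - a) (b - y))) (Rabs (y - x) / 2)).
  pose proof (Rmin_l (Rmin (x - a) (b - x)) (Rmin (y - a) (b - y))).
  pose proof (Rmin_r (Rmin (x - a) (b - x)) (Rmin (y - a) (b - y))).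
  pose proof (Rmin_l (x - a) (b - x)); pose proof (Rmin_r (x - a) (b - x)).
  pose proof (Rmin_l (y - a) (b - y)); pose proof (Rmin_r (y - a) (b - y)).
  set (e := Rmin (Rmin (Rmin (x - a) (b - x)) (Rmin (y - a) (b - y))) (Rabs (y - x) / 2)) in *.
  assert (He : 0 < e) by (unfold e; repeat apply Rmin_case; lra).
  exists (mkposreal e He); simpl; intros x' y' Hx' Hy'.
  split_Rabs; repeat split; lra.
Qed.

Lemma RInt_segment (f : R -> R) x y : ex_RInt f x y ->
  RInt f x y = (y - x) * RInt (fun t => f (x + t * (y - x))) 0 1.
Proof.
  intros Hf.
  destruct (Req_dec x y) as [<-|Hxy].
  { rewrite RInt_point, Rminus_diag, Rmult_0_l; reflexivity. }
  assert (Hlin : ex_RInt f ((y - x) * 0 + x) ((y - x) * 1 + x)).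
  { now replace ((y - x) * 0 + x) with x by ring; replace ((y - x) * 1 + x) with y by ring. }
  assert (Hcomp : ex_RInt (fun t => f (x + t * (y - x))) 0 1).
  { apply (ex_RInt_ext (fun t => scal (/ (y - x)) (scal (y - x) (f ((y - x) * t + x))))).
    - intros t _; change (/ (y - x) * ((y - x) * f ((y - x) * t + x)) = f (x + t * (y - x))).
      replace ((y - x) * t + x) with (x + t * (y - x)) by ring; field; lra.
    - apply (ex_RInt_scal (fun t => scal (y - x) (f ((y - x) * t + x)))).
      exact (ex_RInt_comp_lin _ _ _ _ _ Hlin). }
  assert (Hc := RInt_comp_lin f (y - x) x 0 1 Hlin).
  replace ((y - x) * 0 + x) with x in Hc by ring.
  replace ((y - x) * 1 + x) with y in Hc by ring.
  rewrite <- Hc.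
  change ((y - x) * RInt (fun t => f (x + t * (y - x))) 0 1)
    with (scal (y - x) (RInt (fun t => f (x + t * (y - x))) 0 1)).
  rewrite <- (RInt_scal _ _ _ _ Hcomp).
  apply RInt_ext; intros t _.
  now replace ((y - x) * t + x) with (x + t * (y - x)) by ring.
Qed.

Lemma RInt_reflect (f : R -> R) : ex_RInt f 0 1 ->
  RInt f 0 1 = RInt (fun t => f (1 - t)) 0 1.
Proof.
  intros Hf.
  assert (E := RInt_segment f 1 0 (ex_RInt_swap _ _ _ Hf)).
  rewrite <- (opp_RInt_swap _ _ _ Hf) in E; unfold opp in E; simpl in E.
  rewrite (RInt_ext (fun t => f (1 - t)) (fun t => f (1 + t * (0 - 1)))); [lra|].
  intros t _; f_equal; ring.
Qed.

Lemma derivable_pt_lim_unique_loc (f f' : R -> R) y l l' (d : posreal) :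
  (forall z, Rabs (z - y) < d -> f z = f' z) ->
  derivable_pt_lim f y l -> derivable_pt_lim f' y l' -> l = l'.
Proof.
  intros Hff' Hl Hl'.
  apply is_derive_Reals, is_derive_unique in Hl'; rewrite <- Hl'.
  symmetry; apply is_derive_unique.
  apply (is_derive_ext_loc f); [exists d; exact Hff'|].
  now apply is_derive_Reals.
Qed.

Lemma mixed_partials_unique F a b i j D D' :
  mixed_partials F a b i j D -> mixed_partials F a b i j D' ->
  forall x y, offdiag a b x y -> D i j x y = D' i j x y.
Proof.
  intros (D00 & Dy & Dx) (D'00 & D'y & D'x).
  assert (Hcol : forall k, (k <= j)%nat -> forall x y, offdiag a b x y ->
            D 0%nat k x y = D' 0%nat k x y).
  { induction k as [|k IH]; intros Hk x y Hxy.
    - now rewrite D00, D'00.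
    - destruct (offdiag_open a b x y Hxy) as [d Hd].
      apply (derivable_pt_lim_unique_loc (fun y' => D 0%nat k x y')
               (fun y' => D' 0%nat k x y') y _ _ d).
      + intros z Hz; apply IH; [lia|].
        apply Hd; [rewrite Rminus_diag, Rabs_R0; apply cond_pos | exact Hz].
      + apply Dy; [lia | exact Hxy].
      + apply D'y; [lia | exact Hxy]. }
  assert (Hrow : forall k, (k <= i)%nat -> forall x y, offdiag a b x y ->
            D k j x y = D' k j x y).
  { induction k as [|k IH]; intros Hk x y Hxy.
    - now apply Hcol.
    - destruct (offdiag_open a b x y Hxy) as [d Hd].
      apply (derivable_pt_lim_unique_loc (fun x' => D k j x' y)
               (fun x' => D' k j x' y) x _ _ d).
      + intros z Hz; apply IH; [lia|].
        apply Hd; [exact Hz | rewrite Rminus_diag, Rabs_R0; apply cond_pos].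
      + apply Dx; [lia | exact Hxy].
      + apply D'x; [lia | exact Hxy]. }
  now apply Hrow.
Qed.

Section DividedDifferenceIntegral.

Variables (a b : R) (G : nat -> R -> R) (N : nat).
Hypothesis G_derive : forall k x, (k < N)%nat -> a < x < b ->
  derivable_pt_lim (G k) x (G (S k) x).
Hypothesis G_cont : forall x, a < x < b -> continuity_pt (G N) x.

Lemma continuity_pt_derivatives k x : (k <= N)%nat -> a < x < b ->
  continuity_pt (G k) x.
Proof.
  intros Hk Hx.
  destruct (Nat.eq_dec k N) as [->|HkN]; [now apply G_cont|].
  apply derivable_continuous_pt; exists (G (S k) x).
  apply G_derive; [lia | exact Hx].
Qed.

Lemma ex_RInt_segment k (w : R -> R) x y :
  (k <= N)%nat -> a < x < b -> a < y < b -> (forall t, continuity_pt w t) ->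
  ex_RInt (fun t => G k (x + t * (y - x)) * w t) 0 1.
Proof.
  intros Hk Hx Hy Hw.
  destruct (segment_locally_in_interval a b x y Hx Hy) as [d Hd].
  pose proof (cond_pos d).
  apply (@ex_RInt_continuous R_CompleteNormedModule); intros t Ht.
  rewrite Rmin_left, Rmax_right in Ht by lra.
  apply continuity_pt_filterlim, continuity_pt_mult; [|apply Hw].
  apply (continuity_pt_comp (fun t => x + t * (y - x)) (G k)); [reg|].
  apply continuity_pt_derivatives; [exact Hk|].
  apply Hd; [rewrite Rminus_diag, Rabs_R0 | ]; lra.
Qed.

Lemma is_derive_segment_integrand k (w : R -> R) x c t :
  (k < N)%nat -> a < x + t * (c - x) < b ->
  is_derive (fun c' => G k (x + t * (c' - x)) * w t) c
    (G (S k) (x + t * (c - x)) * t * w t).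
Proof.
  intros Hk Hc.
  assert (Hlin : is_derive (fun c' => x + t * (c' - x)) c t)
    by (auto_derive; [easy | ring]).
  assert (HGk : is_derive (G k) (x + t * (c - x)) (G (S k) (x + t * (c - x))))
    by (apply is_derive_Reals, G_derive; assumption).
  assert (Hprod := is_derive_scal_l _ _ _ (w t) (is_derive_comp _ _ _ _ _ HGk Hlin)).
  unfold scal in Hprod; simpl in Hprod; unfold mult in Hprod; simpl in Hprod.
  now replace (G (S k) (x + t * (c - x)) * t * w t)
    with (t * G (S k) (x + t * (c - x)) * w t) by ring.
Qed.

Lemma derivable_pt_lim_RInt_segment k (w : R -> R) x y :
  (k < N)%nat -> a < x < b -> a < y < b -> (forall t, continuity_pt w t) ->
  derivable_pt_lim (fun c => RInt (fun t => G k (x + t * (c - x)) * w t) 0 1) y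
    (RInt (fun t => G (S k) (x + t * (y - x)) * t * w t) 0 1).
Proof.
  intros Hk Hx Hy Hw.
  destruct (segment_locally_in_interval a b x y Hx Hy) as [d Hd].
  pose proof (cond_pos d).
  assert (Hderiv : forall c t, Rabs (c - y) < d -> -d < t < 1 + d ->
    is_derive (fun c' => G k (x + t * (c' - x)) * w t) c
      (G (S k) (x + t * (c - x)) * t * w t))
    by (intros; apply is_derive_segment_integrand; [exact Hk | now apply Hd]).
  apply is_derive_Reals.
  replace (RInt (fun t => G (S k) (x + t * (y - x)) * t * w t) 0 1)
    with (RInt (fun t => Derive (fun c => G k (x + t * (c - x)) * w t) y) 0 1).
  2: { apply RInt_ext; intros t Ht; rewrite Rmin_left, Rmax_right in Ht by lra.
       apply is_derive_unique, Hderiv; [rewrite Rminus_diag, Rabs_R0|]; lra. }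
  apply (is_derive_RInt_param (fun c t => G k (x + t * (c - x)) * w t)).
  - exists d; intros c Hc t Ht; rewrite Rmin_left, Rmax_right in Ht by lra.
    eexists; apply Hderiv; [exact Hc | lra].
  - intros t Ht; rewrite Rmin_left, Rmax_right in Ht by lra.
    apply continuity_2d_pt_ext_loc
      with (f := fun c t => G (S k) (x + t * (c - x)) * t * w t).
    + exists d; intros c t' Hc Ht'; apply Rabs_def2 in Ht'.
      symmetry; apply is_derive_unique, Hderiv; [exact Hc | lra].
    + apply continuity_2d_pt_mult; [apply continuity_2d_pt_mult|].
      * apply continuity_1d_2d_pt_comp.
        -- apply continuity_pt_derivatives; [lia|].
           apply Hd; [rewrite Rminus_diag, Rabs_R0|]; lra.
        -- apply continuity_2d_pt_plus; [apply continuity_2d_pt_const|].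
           apply continuity_2d_pt_mult; [apply continuity_2d_pt_id2|].
           apply continuity_2d_pt_minus;
             [apply continuity_2d_pt_id1 | apply continuity_2d_pt_const].
      * apply continuity_2d_pt_id2.
      * apply (continuity_1d_2d_pt_comp w (fun _ t => t));
          [apply Hw | apply continuity_2d_pt_id2].
  - exists d; intros c Hc.
    apply ex_RInt_segment; [lia | exact Hx | | exact Hw].
    replace c with (x + 1 * (c - x)) by ring; apply Hd; [exact Hc | lra].
Qed.

Definition ddiff_integral (i j : nat) (x y : R) : R :=
  RInt (fun t => G (S (i + j)) (x + t * (y - x)) * ((1 - t) ^ i * t ^ j)) 0 1.

Lemma ddiff_integral_sym i j x y : (S (i + j) <= N)%nat ->
  a < x < b -> a < y < b -> ddiff_integral i j x y = ddiff_integral j i y x.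
Proof.
  intros Hij Hx Hy; unfold ddiff_integral.
  rewrite RInt_reflect by (apply ex_RInt_segment; auto; intros; reg).
  apply RInt_ext; intros t _.
  rewrite (Nat.add_comm i j).
  replace (x + (1 - t) * (y - x)) with (y + t * (x - y)) by ring.
  replace (1 - (1 - t)) with t by ring.
  (* [RInt_ext] states its equation in the carrier of a normed module; [simpl]
     exposes it as [R] so that [ring] applies. *)
  simpl; ring.
Qed.

Lemma ddiff_integral_derive_y i k x y : (S (S (i + k)) <= N)%nat ->
  a < x < b -> a < y < b ->
  derivable_pt_lim (fun y' => ddiff_integral i k x y') y (ddiff_integral i (S k) x y).
Proof.
  intros Hik Hx Hy; unfold ddiff_integral; rewrite Nat.add_succ_r.
  replace (RInt _ 0 1) with
    (RInt (fun t => G (S (S (i + k))) (x + t * (y - x)) * t * ((1 - t) ^ i * t ^ k)) 0 1)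
    by (apply RInt_ext; intros; simpl; ring).
  apply derivable_pt_lim_RInt_segment; [lia | exact Hx | exact Hy | intros; reg].
Qed.

Lemma ddiff_integral_derive_x k j x y : (S (S (k + j)) <= N)%nat ->
  a < x < b -> a < y < b ->
  derivable_pt_lim (fun x' => ddiff_integral k j x' y) x (ddiff_integral (S k) j x y).
Proof.
  intros Hkj Hx Hy.
  rewrite (ddiff_integral_sym (S k) j x y) by (auto; lia).
  apply is_derive_Reals, (is_derive_ext_loc (fun x' => ddiff_integral j k y x')).
  - apply (locally_interval _ x a b); simpl; [lra | lra |].
    intros x' Hax' Hx'b; simpl in Hax', Hx'b.
    symmetry; apply ddiff_integral_sym; [lia | lra | exact Hy].
  - apply is_derive_Reals, ddiff_integral_derive_y; [lia | exact Hy | exact Hx].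
Qed.

Lemma ddiff_integral_00 x y : (1 <= N)%nat -> a < x < b -> a < y < b -> x <> y ->
  ddiff_integral 0 0 x y = ddiff (G 0) x y.
Proof.
  intros HN Hx Hy Hxy; unfold ddiff_integral, ddiff; simpl (S (0 + 0)).
  assert (Hbetween : forall z, Rmin x y <= z <= Rmax x y -> a < z < b).
  { intros z [Hlo Hhi]; split.
    - apply Rlt_le_trans with (2 := Hlo); apply Rmin_glb_lt; lra.
    - apply Rle_lt_trans with (1 := Hhi); apply Rmax_lub_lt; lra. }
  assert (HFTC : is_RInt (G 1%nat) x y (G 0%nat y - G 0%nat x)).
  { apply (is_RInt_derive (G 0%nat)); intros z Hz.
    - apply is_derive_Reals, G_derive; [lia | now apply Hbetween].
    - apply continuity_pt_filterlim, continuity_pt_derivatives; [exact HN|].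
      now apply Hbetween. }
  assert (Hseg := RInt_segment _ _ _ (ex_intro _ _ HFTC)).
  rewrite (is_RInt_unique _ _ _ _ HFTC) in Hseg.
  rewrite (RInt_ext _ (fun t => G 1%nat (x + t * (y - x)))) by (intros; simpl; ring).
  unfold minus, plus, opp in Hseg; simpl in Hseg.
  rewrite Hseg, Rmult_div_r; [reflexivity | lra].
Qed.

Lemma mixed_partials_ddiff_integral (g : R -> R) i j :
  (S (i + j) <= N)%nat -> (forall x, a < x < b -> G 0%nat x = g x) ->
  mixed_partials (ddiff g) a b i j ddiff_integral.
Proof.
  intros Hij Hg; split; [|split].
  - intros x y (Hx & Hy & Hxy).
    rewrite ddiff_integral_00 by (auto; lia).
    unfold ddiff; now rewrite !Hg.
  - intros k x y Hk (Hx & Hy & _); apply ddiff_integral_derive_y; auto; lia.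
  - intros k x y Hk (Hx & Hy & _); apply ddiff_integral_derive_x; auto; lia.
Qed.

End DividedDifferenceIntegral.

Lemma ex_RInt_beta_weight (h : R -> R) i j u v : u < v ->
  (forall z, u <= z <= v -> continuity_pt h z) ->
  ex_RInt (fun z => h z * (z - u) ^ j * (v - z) ^ i) u v.
Proof.
  intros Huv Hh.
  apply (@ex_RInt_continuous R_CompleteNormedModule); intros z Hz.
  rewrite Rmin_left, Rmax_right in Hz by lra.
  apply continuity_pt_filterlim; repeat apply continuity_pt_mult; [apply Hh; lra | reg | reg].
Qed.

Lemma RInt_beta_weight (h : R -> R) i j u v : u < v ->
  (forall z, u <= z <= v -> continuity_pt h z) ->
  RInt (fun z => h z * (z - u) ^ j * (v - z) ^ i) u v =
  (v - u) ^ S (i + j) * RInt (fun t => h (u + t * (v - u)) * ((1 - t) ^ i * t ^ j)) 0 1.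
Proof.
  intros Huv Hh.
  rewrite RInt_segment by (now apply ex_RInt_beta_weight).
  assert (Hex : ex_RInt (fun t => h (u + t * (v - u)) * ((1 - t) ^ i * t ^ j)) 0 1).
  { apply (@ex_RInt_continuous R_CompleteNormedModule); intros t Ht.
    rewrite Rmin_left, Rmax_right in Ht by lra.
    apply continuity_pt_filterlim, continuity_pt_mult; [|reg].
    apply (continuity_pt_comp (fun t => u + t * (v - u)) h); [reg | apply Hh; nra]. }
  assert (Hscal : RInt (fun t => (v - u) ^ (i + j) *
                    (h (u + t * (v - u)) * ((1 - t) ^ i * t ^ j))) 0 1 =
                  (v - u) ^ (i + j) *
                    RInt (fun t => h (u + t * (v - u)) * ((1 - t) ^ i * t ^ j)) 0 1)
    by exact (RInt_scal _ _ _ _ Hex).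
  rewrite <- tech_pow_Rmult, Rmult_assoc, <- Hscal.
  f_equal; apply RInt_ext; intros t _.
  replace (u + t * (v - u) - u) with (t * (v - u)) by ring.
  replace (v - (u + t * (v - u))) with ((1 - t) * (v - u)) by ring.
  rewrite !Rpow_mult_distr, pow_add; simpl; ring.
Qed.

Lemma has_integral_RInt (f : R -> R) a b I :
  ex_RInt f a b -> RInt f a b = I -> has_integral f a b I.
Proof.
  intros Hf HI; exists (ex_RInt_Reals_0 _ _ _ Hf).
  now rewrite <- RInt_Reals.
Qed.

Lemma is_Beta_RInt r s : is_Beta r s (RInt (fun t => t ^ (r - 1) * (1 - t) ^ (s - 1)) 0 1).
Proof.
  apply has_integral_RInt; [|reflexivity].
  apply (@ex_RInt_continuous R_CompleteNormedModule); intros t _.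
  apply continuity_pt_filterlim; reg.
Qed.

Lemma has_integral_beta_density (h : R -> R) r s u v Bv I :
  (v - u) ^ (r + s - 1) <> 0 ->
  ex_RInt (fun t => h t * (t - u) ^ (s - 1) * (v - t) ^ (r - 1)) u v ->
  RInt (fun t => h t * (t - u) ^ (s - 1) * (v - t) ^ (r - 1)) u v = (v - u) ^ (r + s - 1) * I ->
  has_integral (fun t => h t * beta_density r s u v Bv t) u v (/ Bv * I).
Proof.
  intros Hvu Hex HI.
  set (f := fun t => h t * (t - u) ^ (s - 1) * (v - t) ^ (r - 1)) in *.
  set (c := / Bv / (v - u) ^ (r + s - 1)).
  assert (Hdens : forall t, c * f t = h t * beta_density r s u v Bv t)
    by (intros t; unfold c, f, beta_density, Rdiv; ring).
  assert (Hscal : RInt (fun t => c * f t) u v = c * RInt f u v)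
    by exact (RInt_scal _ _ _ c Hex).
  apply has_integral_RInt.
  - apply (ex_RInt_ext (fun t => c * f t)); [intros; apply Hdens|].
    exact (ex_RInt_scal _ _ _ c Hex).
  - rewrite <- (RInt_ext (fun t => c * f t)) by (intros; apply Hdens).
    rewrite Hscal, HI; simpl; unfold c.
    destruct (Req_dec Bv 0) as [->|HBv]; [rewrite Rinv_0; unfold Rdiv; ring | field; now split].
Qed.

Theorem mainTheorem5 (r s : nat) (u v a b : R) (g : R -> R) (G : nat -> R -> R) :
  (1 <= r)%nat -> (1 <= s)%nat -> u < v -> a < u -> v < b ->
  (forall x, a < x < b -> G 0%nat x = g x) ->
  (forall k x, (k < r + s - 1)%nat -> a < x < b ->
     derivable_pt_lim (G k) x (G (S k) x)) ->
  (forall x, a < x < b -> continuity_pt (G (r + s - 1)%nat) x) ->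
  (exists D, mixed_partials (ddiff g) a b (r - 1) (s - 1) D) /\
  (forall D, mixed_partials (ddiff g) a b (r - 1) (s - 1) D ->
     (exists Bv, is_Beta r s Bv /\
        has_integral (fun t => G (r + s - 1)%nat t * beta_density r s u v Bv t)
          u v (/ Bv * D (r - 1)%nat (s - 1)%nat u v)) /\
     has_integral
       (fun t => G (r + s - 1)%nat t * (t - u) ^ (s - 1) * (v - t) ^ (r - 1))
       u v ((v - u) ^ (r + s - 1) * D (r - 1)%nat (s - 1)%nat u v)).
Proof.
  intros Hr Hs Huv Hau Hvb HG0 HD HC.
  assert (HN : S (r - 1 + (s - 1)) = (r + s - 1)%nat) by lia.
  assert (HM : mixed_partials (ddiff g) a b (r - 1) (s - 1) (ddiff_integral G))
    by (apply (mixed_partials_ddiff_integral a b G (r + s - 1)); auto; lia).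
  split; [now exists (ddiff_integral G)|].
  intros D HDm.
  rewrite (mixed_partials_unique _ _ _ _ _ _ _ HDm HM u v) by (repeat split; lra).
  assert (Hcont : forall z, u <= z <= v -> continuity_pt (G (r + s - 1)%nat) z)
    by (intros; apply HC; lra).
  assert (Hex := ex_RInt_beta_weight _ (r - 1) (s - 1) u v Huv Hcont).
  assert (Hid := RInt_beta_weight _ (r - 1) (s - 1) u v Huv Hcont).
  rewrite HN in Hid; unfold ddiff_integral; rewrite HN.
  split.
  - eexists; split; [apply is_Beta_RInt|].
    apply has_integral_beta_density; [apply pow_nonzero; lra | exact Hex | exact Hid].
  - now apply has_integral_RInt.
Qed.
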